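(* Let $(W,S)$ be a Coxeter system with $S=D$ finite and $W$ infinite. For each $X\subsetneq D$ write $\varepsilon(X)/W_X(t)$ as an irreducible fraction of polynomials with monic denominator. Then the least common multiple of all these denominators (over all $X\subsetneq D$, with $W_X$ finite or infinite) equals $\mathrm{Virg}(D)$, the monic least common multiple of the polynomials $W_X(t)$ over $X\subsetneq D$ with $W_X$ finite.
   Context: $\varepsilon(X)=(-1)^{|X|}$. For $X\subseteq S$, $W_X$ is the special subgroup generated by $X$ and $W_X(t)=\sum_{g\in W_X}t^{l(g)}$ its Poincaré series (a rational function; a polynomial, monic with constant term $1$, when $W_X$ is finite). The empty set gives $W_\emptyset(t)=1$. *)

From Stdlib Require Import ClassicalEpsilon.
From HB Require Import structures.
From mathcomp Require Import all_boot all_order all_algebra.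
Set Implicit Arguments. Unset Strict Implicit. Unset Printing Implicit Defensive.
Import Order.TTheory GRing.Theory Num.Theory.
Local Open Scope ring_scope.

Definition pb (P : Prop) : bool := if excluded_middle_informative P then true else false.

Section Coxeter.
Variable T : finType.
Variable m : T -> T -> nat.      (* Coxeter matrix; 0 encodes m(s,t) = infinity *)

Definition coxeter_matrix : Prop :=
  (forall s, m s s = 1%N :> nat) /\ (forall s t, m s t = m t s) /\
  (forall s t, s != t -> m s t != 1%N :> nat).

Fixpoint alt (s t : T) (k : nat) : seq T :=
  if k is k'.+1 then s :: alt t s k' else [::].

(* Equality in W = <S | s^2 = 1, (st)^{m(s,t)} = 1> of the elements represented
   by two words (monoid presentation: s s = 1 and the braid relations). *)
Inductive coxeq : seq T -> seq T -> Prop :=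
| coxeq_refl w : coxeq w w
| coxeq_sym u v : coxeq u v -> coxeq v u
| coxeq_trans u v w : coxeq u v -> coxeq v w -> coxeq u w
| coxeq_sq u v s : coxeq (u ++ [:: s; s] ++ v) (u ++ v)
| coxeq_braid u v s t : (0 < m s t)%N ->
    coxeq (u ++ alt s t (m s t) ++ v) (u ++ alt t s (m s t) ++ v).

Definition reduced (w : seq T) : Prop := forall v, coxeq w v -> (size w <= size v)%N.

Definition inWX (X : {set T}) (w : seq T) : Prop :=
  exists v, coxeq w v /\ all (mem X) v.

(* a X n = #{ g in W_X : l(g) = n }, counted as the number of distinct
   elements represented by reduced words of length n lying in W_X. *)
Definition growth (X : {set T}) (n : nat) : nat :=
  #|[set [set v : n.-tuple T | pb (coxeq (tval w) (tval v))]
     | w in [set w : n.-tuple T | pb (reduced (tval w) /\ inWX X (tval w))]]|.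

Definition WX_finite (X : {set T}) : Prop :=
  exists s : seq (seq T), forall w, inWX X w -> exists2 v, v \in s & coxeq w v.

Definition poincare_poly (X : {set T}) (P : {poly rat}) : Prop :=
  forall i, P`_i = (growth X i)%:R.

Definition eps (X : {set T}) : rat := (-1) ^+ #|X|.

(* eps(X)/W_X(t) = p/q as formal power series, i.e. eps(X) * q = p * W_X(t) *)
Definition fraction_eq (X : {set T}) (p q : {poly rat}) : Prop :=
  forall n, eps X * q`_n = \sum_(i < n.+1) p`_i * (growth X (n - i))%:R.

Definition irred_denom (X : {set T}) (q : {poly rat}) : Prop :=
  exists p : {poly rat}, [/\ q \is monic, coprimep p q & fraction_eq X p q].

End Coxeter.

Definition is_monic_lcm (F : {poly rat} -> Prop) (L : {poly rat}) : Prop :=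
  [/\ L \is monic, (forall p, F p -> p %| L) &
      (forall M, (forall p, F p -> p %| M) -> L %| M)].

Definition Virg (T : finType) (m : T -> T -> nat) (L : {poly rat}) : Prop :=
  is_monic_lcm (fun P => exists X : {set T},
                  [/\ X \proper [set: T], WX_finite m X & poincare_poly m X P]) L.

From Stdlib Require Import ClassicalEpsilon FunctionalExtensionality PropExtensionality Classical.
From Stdlib Require Import Reals Lra.
From HB Require Import structures.
From mathcomp Require Import all_boot all_order all_algebra.
Set Implicit Arguments. Unset Strict Implicit. Unset Printing Implicit Defensive.

(* Let L = Virg(D) be the monic lcm of the W_X(t), X proper with W_X finite.
   The heart of the proof is Solomon's recursion: for Y a subset of X, every
   element of W_X factors uniquely as a b with b in W_Y and a a minimal coset
   representative, with l(a b) = l(a) + l(b), so W_X(t) = W_X^Y(t) W_Y(t)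
   ([growth_factor]); when W_X is infinite every element has an ascent in X,
   and inclusion-exclusion gives \sum_(Y proper in X) eps(Y) W_X^Y(t) = -eps(X)
   ([inclusion_exclusion]).  Dividing by W_X(t) and inducting on |X| shows that
   eps(X)/W_X(t) = g/L for every proper X ([fraction_over_lcm]), so every
   reduced denominator divides L; conversely W_X(t), for W_X finite, is up to a
   unit the reduced denominator of eps(X)/W_X(t), so L divides every common
   multiple of the denominators ([mainTheorem5]).

   The length combinatorics used above (l(ws) = l(w) +- 1, additivity of the
   length on parabolic factorizations) is derived from the geometric
   representation: w(alpha_s) is a nonnegative combination of simple roots
   exactly when l(ws) > l(w) ([root_pos]). *)

Section Words.
Variables (T : finType) (m : T -> T -> nat).
Local Notation coxeq := (coxeq m).

Lemma pbP (P : Prop) : reflect P (pb P).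
Proof. by rewrite /pb; case: excluded_middle_informative => H; constructor. Qed.

Lemma coxeq_catl a u v : coxeq u v -> coxeq (a ++ u) (a ++ v).
Proof.
elim=> {u v} [w|u v _ IH|u v w _ IH1 _ IH2|u v s|u v s t Hm].
- exact: coxeq_refl.
- exact: coxeq_sym.
- exact: coxeq_trans IH1 IH2.
- by have := coxeq_sq m (a ++ u) v s; rewrite -!catA.
- by have := coxeq_braid (a ++ u) v Hm; rewrite -!catA.
Qed.

Lemma coxeq_catr b u v : coxeq u v -> coxeq (u ++ b) (v ++ b).
Proof.
elim=> {u v} [w|u v _ IH|u v w _ IH1 _ IH2|u v s|u v s t Hm].
- exact: coxeq_refl.
- exact: coxeq_sym.
- exact: coxeq_trans IH1 IH2.
- by have := coxeq_sq m u (v ++ b) s; rewrite -!catA.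
- by have := coxeq_braid u (v ++ b) Hm; rewrite -!catA.
Qed.

Lemma coxeq_cat u u' v v' : coxeq u u' -> coxeq v v' -> coxeq (u ++ v) (u' ++ v').
Proof. by move=> Hu Hv; apply: coxeq_trans (coxeq_catr v Hu) (coxeq_catl u' Hv). Qed.

Lemma coxeq_sq_r w s : coxeq ((w ++ [:: s]) ++ [:: s]) w.
Proof. by rewrite -catA; have := coxeq_sq m w [::] s; rewrite !cats0. Qed.

(* Generators are involutions, so the reversed word represents the inverse. *)
Lemma coxeq_rev_cancel w : coxeq (w ++ rev w) [::].
Proof.
elim: w => [|a w IH] /=; first exact: coxeq_refl.
rewrite rev_cons -cats1 catA -cat_cons -cat1s.
apply: coxeq_trans (coxeq_catr _ (coxeq_catl _ IH)) _.
by have := coxeq_sq m [::] [::] a.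
Qed.

Lemma coxeq_rev_cancel' w : coxeq (rev w ++ w) [::].
Proof. by have := coxeq_rev_cancel (rev w); rewrite revK. Qed.

Lemma coxeq_rev u v : coxeq u v -> coxeq (rev u) (rev v).
Proof.
move=> H.
have H1 : coxeq (rev u) (rev u ++ (v ++ rev v)).
  rewrite -{1}(cats0 (rev u)); apply/coxeq_catl/coxeq_sym; exact: coxeq_rev_cancel.
apply: coxeq_trans H1 _; rewrite catA -[X in coxeq _ X]cat0s; apply: coxeq_catr.
apply: coxeq_trans (coxeq_catl _ (coxeq_sym H)) _; exact: coxeq_rev_cancel'.
Qed.

Lemma size_alt (s t : T) k : size (alt s t k) = k.
Proof. by elim: k s t => //= k IH s t; rewrite IH. Qed.

Lemma coxeq_size_odd u v : coxeq u v -> odd (size u) = odd (size v).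
Proof.
elim=> // [u0 v0 w _ -> _ ->|u0 v0 s|u0 v0 s t _] //.
- by rewrite !size_cat /= !addnS /= negbK.
- by rewrite !size_cat !size_alt.
Qed.

Definition lenP (w : seq T) (n : nat) : bool := pb (exists v, coxeq w v /\ size v = n).

Lemma lenP_ex w : exists n, lenP w n.
Proof. by exists (size w); apply/pbP; exists w; split; [apply: coxeq_refl|]. Qed.

Definition len w := ex_minn (lenP_ex w).

Lemma len_spec w : exists v, coxeq w v /\ size v = len w.
Proof. by rewrite /len; case: ex_minnP => n /pbP. Qed.

Lemma len_min w v : coxeq w v -> len w <= size v.
Proof. by move=> H; rewrite /len; case: ex_minnP => n _; apply; apply/pbP; exists v. Qed.

Lemma len_coxeq u v : coxeq u v -> len u = len v.
Proof.
move=> H; apply/eqP; rewrite eqn_leq; apply/andP; split.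
- have [w [Hvw <-]] := len_spec v; apply: len_min; exact: coxeq_trans Hvw.
- have [w [Huw <-]] := len_spec u; apply: len_min; exact: coxeq_trans (coxeq_sym H) Huw.
Qed.

Lemma len_size w : len w <= size w.
Proof. exact/len_min/coxeq_refl. Qed.

Lemma len_odd w : odd (len w) = odd (size w).
Proof. by have [v [H <-]] := len_spec w; rewrite (coxeq_size_odd H). Qed.

Lemma len_cat u v : len (u ++ v) <= len u + len v.
Proof.
have [u' [Hu <-]] := len_spec u; have [v' [Hv <-]] := len_spec v.
by rewrite -size_cat; apply/len_min/coxeq_cat.
Qed.

Lemma len_nil : len [::] = 0.
Proof. by apply/eqP; rewrite -leqn0 len_size. Qed.

Lemma len_single (r : T) : len [:: r] = 1.
Proof. by have := len_odd [:: r]; have := len_size [:: r]; case: (len [:: r]) => [|[|]]. Qed.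

Lemma len0 w : len w = 0 -> coxeq w [::].
Proof. by have [v [H Hv]] := len_spec w => E; rewrite E in Hv; move/size0nil: Hv => <-. Qed.

Lemma reducedE w : reduced m w <-> size w = len w.
Proof.
split=> [Hw|Hw v Hv]; last by rewrite Hw len_min.
by apply/eqP; rewrite eqn_leq len_size andbT; have [v [Hv <-]] := len_spec w; exact: Hw.
Qed.

Lemma len_step w s : len (w ++ [:: s]) = (len w).+1 \/ (len (w ++ [:: s])).+1 = len w.
Proof.
have up : len (w ++ [:: s]) <= (len w).+1.
  by apply: leq_trans (len_cat _ _) _; rewrite len_single addn1.
have down : len w <= (len (w ++ [:: s])).+1.
  by rewrite -{1}(len_coxeq (coxeq_sq_r w s)); apply: leq_trans (len_cat _ _) _;
     rewrite len_single addn1.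
have par : odd (len (w ++ [:: s])) = ~~ odd (len w).
  by rewrite !len_odd size_cat addn1.
case: (ltngtP (len (w ++ [:: s])) (len w)) => H.
- by right; apply/eqP; rewrite eqn_leq H down.
- by left; apply/eqP; rewrite eqn_leq H up.
- by rewrite H in par; case: (odd _) par.
Qed.

Definition ascent w s : bool := len w < len (w ++ [:: s]).

Lemma len_asc_eq w s : ascent w s -> len (w ++ [:: s]) = (len w).+1.
Proof. by rewrite /ascent; case: (len_step w s) => // <-; rewrite ltnNge leqnSn. Qed.

Lemma len_desc_eq w s : ~~ ascent w s -> (len (w ++ [:: s])).+1 = len w.
Proof. by rewrite /ascent; case: (len_step w s) => // ->; rewrite leqnn. Qed.

Lemma alt_rcons (x y : T) k : alt x y k.+1 = rcons (alt x y k) (if odd k then y else x).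
Proof. by elim: k x y => //= k IH x y; rewrite IH; case: (odd k). Qed.

Lemma rev_alt (s t : T) k :
  rev (alt t s k) = alt (if odd k then t else s) (if odd k then s else t) k.
Proof. by elim: k s t => // k IH s t; rewrite alt_rcons rev_rcons IH /=; case: (odd k). Qed.

Lemma alt_cat (s t : T) k j :
  alt s t (k + j) = alt s t k ++ alt (if odd k then t else s) (if odd k then s else t) j.
Proof. by elim: k s t => //= k IH s t; rewrite IH; case: (odd k). Qed.

Lemma mem_alt (s t r : T) k : r \in alt s t k -> r = s \/ r = t.
Proof. by elim: k s t => //= k IH s t; rewrite in_cons => /orP [/eqP ->|/IH [] ->]; [left|right|left]. Qed.

(* The alternating word of length k in s and t that ends with t. *)
Definition alt_end (s t : T) k := alt (if odd k then t else s) (if odd k then s else t) k.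

Lemma alt_endS s t k : alt_end s t k.+1 = (if odd k then s else t) :: alt_end s t k.
Proof. by rewrite /alt_end /=; case: (odd k). Qed.

Lemma size_alt_end s t k : size (alt_end s t k) = k.
Proof. exact: size_alt. Qed.

Lemma drop_alt_end s t k j : drop j (alt_end s t k) = alt_end s t (k - j).
Proof.
elim: j k => [|j IH] [|k]; rewrite ?drop0 ?subn0 //.
by rewrite alt_endS /= IH subSS.
Qed.

End Words.

(* The geometric (Tits) representation of W on V = R^S with basis the simple
   roots alpha_s and bilinear form B(alpha_s, alpha_t) = - cos (pi / m(s,t))
   (= -1 when m(s,t) = infinity); s acts by the reflection
   x |-> x - 2 B(alpha_s, x) alpha_s. *)
Section Geometric.
Variables (T : finType) (m : T -> T -> nat).
Hypothesis hm : coxeter_matrix m.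
Local Open Scope R_scope.

Definition vec := T -> R.
Definition sumv (f : T -> R) : R := List.fold_right (fun r acc => f r + acc) 0 (enum T).

Lemma sumv_add f g : sumv (fun r => f r + g r) = sumv f + sumv g.
Proof. by rewrite /sumv; elim: (enum T) => /= [|a l ->]; lra. Qed.

Lemma sumv_scale k f : sumv (fun r => k * f r) = k * sumv f.
Proof. by rewrite /sumv; elim: (enum T) => /= [|a l ->]; lra. Qed.

Definition alpha (s : T) : vec := fun r => if r == s then 1 else 0.

Lemma sumv_alpha g q : sumv (fun r => g r * alpha q r) = g q.
Proof.
rewrite /sumv; have : q \in enum T by rewrite mem_enum.
elim: (enum T) (enum_uniq T) => //= a l IH /andP [Ha Hu]; rewrite in_cons /alpha.
case/orP => [/eqP ->|Hq]; last first.
  by rewrite IH //; case: eqP => [E|_]; [rewrite E Hq in Ha|lra].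
rewrite eqxx; suff -> : List.fold_right (fun r acc => g r * (if r == a then 1 else 0) + acc) 0 l = 0.
  by lra.
elim: l Ha {IH Hu} => //= b l IH; rewrite in_cons negb_or eq_sym => /andP [/negbTE -> /IH ->].
lra.
Qed.

Definition vadd (x y : vec) : vec := fun r => x r + y r.
Definition vscale (k : R) (x : vec) : vec := fun r => k * x r.

Definition cos_m (s t : T) : R := if m s t == 0%N then 1 else cos (PI / INR (m s t)).
Definition bform (s t : T) : R := if s == t then 1 else - cos_m s t.

Definition pairing (s : T) (x : vec) : R := sumv (fun r => bform s r * x r).
Definition refl (s : T) (x : vec) : vec := fun r => x r - 2 * pairing s x * alpha s r.
Definition act (w : seq T) (x : vec) : vec := foldr refl x w.

Lemma pairing_add s x y : pairing s (vadd x y) = pairing s x + pairing s y.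
Proof.
rewrite /pairing -sumv_add; congr sumv.
by apply: functional_extensionality => r; rewrite /vadd; lra.
Qed.

Lemma pairing_scale s k x : pairing s (vscale k x) = k * pairing s x.
Proof.
rewrite /pairing -sumv_scale; congr sumv.
by apply: functional_extensionality => r; rewrite /vscale; lra.
Qed.

Lemma pairing_alpha s q : pairing s (alpha q) = bform s q.
Proof. exact: sumv_alpha. Qed.

Lemma pairing_comb y a p b q :
  pairing y (vadd (vscale a (alpha p)) (vscale b (alpha q))) = a * bform y p + b * bform y q.
Proof. by rewrite pairing_add !pairing_scale !pairing_alpha. Qed.

Lemma bform_ss s : bform s s = 1.
Proof. by rewrite /bform eqxx. Qed.

Lemma bform_st s t : s != t -> bform s t = - cos_m s t.
Proof. by rewrite /bform => /negbTE ->. Qed.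

Lemma cos_m_sym s t : cos_m s t = cos_m t s.
Proof. by case: hm => _ [msym _]; rewrite /cos_m msym. Qed.

Lemma refl_add s x y : refl s (vadd x y) = vadd (refl s x) (refl s y).
Proof. by apply: functional_extensionality => r; rewrite /refl pairing_add /vadd; lra. Qed.

Lemma refl_scale s k x : refl s (vscale k x) = vscale k (refl s x).
Proof. by apply: functional_extensionality => r; rewrite /refl pairing_scale /vscale; lra. Qed.

Lemma act_add w x y : act w (vadd x y) = vadd (act w x) (act w y).
Proof. by elim: w => //= a w ->; rewrite refl_add. Qed.

Lemma act_scale w k x : act w (vscale k x) = vscale k (act w x).
Proof. by elim: w => //= a w ->; rewrite refl_scale. Qed.

Lemma act_cat u v x : act (u ++ v) x = act u (act v x).
Proof. by rewrite /act foldr_cat. Qed.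

Lemma refl_alpha s : refl s (alpha s) = vscale (-1) (alpha s).
Proof. by apply: functional_extensionality => r; rewrite /refl /vscale pairing_alpha bform_ss; lra. Qed.

Lemma refl_invol s x : refl s (refl s x) = x.
Proof.
have Hpair : pairing s (refl s x) = - pairing s x.
  have -> : refl s x = vadd x (vscale (- 2 * pairing s x) (alpha s)).
    by apply: functional_extensionality => q; rewrite /refl /vadd /vscale; lra.
  by rewrite pairing_add pairing_scale pairing_alpha bform_ss; lra.
by apply: functional_extensionality => r; rewrite /refl Hpair /refl; lra.
Qed.

Lemma act_rev_cancel w x : act (rev w) (act w x) = x.
Proof. by elim: w x => //= a w IH x; rewrite rev_cons -cats1 act_cat /= refl_invol IH. Qed.

Lemma act_fix w z : (forall r, r \in w -> pairing r z = 0) -> act w z = z.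
Proof.
elim: w => //= a w IH H; rewrite IH => [|r Hr]; last by apply: H; rewrite in_cons Hr orbT.
by apply: functional_extensionality => r; rewrite /refl H ?mem_head //; lra.
Qed.

(* For c = cos th it is
   sin (k th) / sin th; it gives the coordinates of dihedral roots. *)
Fixpoint cheb_pair (c : R) (k : nat) : R * R :=
  if k is k'.+1 then let (a, b) := cheb_pair c k' in (b, 2 * c * b - a) else (0, 1).
Definition cheb c k := fst (cheb_pair c k).

Lemma chebSS c k : cheb c k.+2 = 2 * c * cheb c k.+1 - cheb c k.
Proof. by rewrite /cheb /=; case: (cheb_pair c k). Qed.

Lemma cheb1 k : cheb 1 k = INR k.
Proof.
suff [] : cheb 1 k = INR k /\ cheb 1 k.+1 = INR k.+1 by [].
elim: k => [|k [IH1 IH2]]; first by rewrite /cheb /=; split; lra.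
by split => //; rewrite chebSS IH1 IH2 !S_INR; lra.
Qed.

Lemma cheb_cos th k : sin th <> 0 -> cheb (cos th) k = sin (INR k * th) / sin th.
Proof.
move=> Hs; suff [] : cheb (cos th) k = sin (INR k * th) / sin th /\
                     cheb (cos th) k.+1 = sin (INR k.+1 * th) / sin th by [].
elim: k => [|k [IH1 IH2]].
  by rewrite /cheb /= Rmult_0_l sin_0 Rmult_1_l; split; field.
split => //; rewrite chebSS IH1 IH2.
have -> : INR k.+2 * th = INR k.+1 * th + th by rewrite !S_INR; lra.
have -> : INR k * th = INR k.+1 * th - th by rewrite !S_INR; lra.
by rewrite sin_plus sin_minus; field.
Qed.

Lemma m_ge2 s t : s != t -> m s t <> 0%N -> (2 <= m s t)%N.
Proof. by case: hm => _ [_ H] st; have := H s t st; case: (m s t) => [|[]]. Qed.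

Lemma INR_m_ge2 s t : s != t -> m s t <> 0%N -> 2 <= INR (m s t).
Proof. by move=> st m0; have := le_INR 2 _ (ssrnat.leP (m_ge2 st m0)). Qed.

Lemma angle_range s t : s != t -> m s t <> 0%N -> 0 < PI / INR (m s t) < PI.
Proof.
move=> st m0; have HM := INR_m_ge2 st m0; have Hpi := PI_RGT_0.
split; first by apply: Rdiv_lt_0_compat; lra.
apply: (Rmult_lt_reg_r (INR (m s t))); first lra.
by rewrite /Rdiv Rmult_assoc Rinv_l; nra.
Qed.

Lemma cos_m_finite s t : m s t <> 0%N -> cos_m s t = cos (PI / INR (m s t)).
Proof. by move=> /eqP/negbTE m0; rewrite /cos_m m0. Qed.

Lemma cheb_nonneg s t k : s != t -> (m s t = 0%N \/ (k <= m s t)%N) -> 0 <= cheb (cos_m s t) k.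
Proof.
move=> st; case: (m s t =P 0%N) => [m0 _|m0 [//|Hk]].
  by rewrite /cos_m m0 /= cheb1; exact: pos_INR.
have [H1 H2] := angle_range st m0; have Hsin := sin_gt_0 _ H1 H2.
rewrite cos_m_finite // cheb_cos; last lra.
apply: Rmult_le_pos; last by apply/Rlt_le/Rinv_0_lt_compat.
have HM := INR_m_ge2 st m0; have Hpi := PI_RGT_0.
have Hkm : INR k <= INR (m s t) by apply/le_INR/ssrnat.leP.
apply: sin_ge_0; first by apply: Rmult_le_pos; [exact: pos_INR|lra].
have -> : INR k * (PI / INR (m s t)) = PI * (INR k / INR (m s t)) by field; lra.
have : INR k / INR (m s t) <= 1.
  by apply: (Rmult_le_reg_r (INR (m s t))); [lra|rewrite /Rdiv Rmult_assoc Rinv_l; lra].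
by nra.
Qed.

Lemma cheb_period s t : s != t -> m s t <> 0%N ->
  cheb (cos_m s t) (2 * m s t) = 0 /\ cheb (cos_m s t) (2 * m s t).+1 = 1.
Proof.
move=> st m0; have [H1 H2] := angle_range st m0; have Hsin := sin_gt_0 _ H1 H2.
have HM := INR_m_ge2 st m0.
rewrite cos_m_finite // !cheb_cos; try lra.
have E : INR (2 * m s t) * (PI / INR (m s t)) = 2 * INR 1 * PI by rewrite mult_INR /=; field; lra.
split.
- by rewrite E; have := sin_period 0 1; rewrite Rplus_0_l sin_0 => ->; lra.
- by rewrite S_INR Rmult_plus_distr_r E Rmult_1_l Rplus_comm sin_period; field; lra.
Qed.

Lemma act_alt_end s t k : s != t ->
  act (alt_end s t k) (alpha s) =
  vadd (vscale (cheb (cos_m s t) k.+1) (alpha (if odd k then t else s)))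
       (vscale (cheb (cos_m s t) k) (alpha (if odd k then s else t))).
Proof.
move=> st; have ts : t != s by rewrite eq_sym.
have Bst : bform s t = - cos_m s t by rewrite bform_st.
have Bts : bform t s = - cos_m s t by rewrite bform_st // cos_m_sym.
elim: k => [|k IH].
  by apply: functional_extensionality => r; rewrite /alt_end /cheb /vadd /vscale /=; lra.
rewrite alt_endS /= IH; apply: functional_extensionality => r.
rewrite /refl pairing_comb /vadd /vscale.
by case: (odd k) => /=; rewrite !bform_ss ?Bst ?Bts chebSS; ring.
Qed.

Lemma even_double n : odd (2 * n) = false.
Proof. by rewrite mul2n odd_double. Qed.

(* (st)^{m(s,t)} fixes alpha_s: the period of the Chebyshev sequence. *)
Lemma act_alt_period_alpha s t : s != t -> m s t <> 0%N ->
  act (alt s t (2 * m s t)) (alpha s) = alpha s.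
Proof.
move=> st m0; have := act_alt_end (2 * m s t) st; rewrite /alt_end even_double /= => ->.
have [-> ->] := cheb_period st m0.
by apply: functional_extensionality => r; rewrite /vadd /vscale; ring.
Qed.

(* (st)^{m(s,t)} acts trivially on V: it fixes alpha_s, alpha_t and the
   B-orthogonal complement of their span, which together span V. *)
Lemma act_alt_period s t x : s != t -> m s t <> 0%N -> act (alt s t (2 * m s t)) x = x.
Proof.
move=> st m0; have ts : t != s by rewrite eq_sym.
have [H1 H2] := angle_range st m0; have Hsin := sin_gt_0 _ H1 H2.
set c := cos_m s t.
have Hc : 1 - c * c <> 0.
  by rewrite /c cos_m_finite //; have := sin2_cos2 (PI / INR (m s t)); rewrite /Rsqr; nra.
have Bst : bform s t = - c by rewrite bform_st.
have Bts : bform t s = - c by rewrite bform_st // cos_m_sym.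
set P := pairing s x; set Q := pairing t x.
set a := (P + c * Q) / (1 - c * c); set b := (Q + c * P) / (1 - c * c).
set z := vadd x (vadd (vscale (- a) (alpha s)) (vscale (- b) (alpha t))).
have Ex : x = vadd z (vadd (vscale a (alpha s)) (vscale b (alpha t))).
  by apply: functional_extensionality => r; rewrite /z /vadd /vscale; ring.
have fix_z : act (alt s t (2 * m s t)) z = z.
  apply: act_fix => r /mem_alt [] ->;
  by rewrite /z !pairing_add !pairing_scale !pairing_alpha !bform_ss ?Bst ?Bts -/P -/Q /a /b; field.
have fix_t : act (alt s t (2 * m s t)) (alpha t) = alpha t.
  have mts : m t s = m s t by case: hm => _ [].
  have := act_alt_period_alpha ts (fun E => m0 (etrans (esym mts) E)); rewrite mts => E.
  have := rev_alt s t (2 * m s t); rewrite even_double => <-.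
  by rewrite -{1}E act_rev_cancel.
clearbody z.
by rewrite {1}Ex !act_add !act_scale fix_z act_alt_period_alpha // fix_t -Ex.
Qed.

Lemma act_braid s t x : (0 < m s t)%N -> act (alt s t (m s t)) x = act (alt t s (m s t)) x.
Proof.
move=> Hm; case: (eqVneq s t) => [<-|st] //.
have m0 : m s t <> 0%N by move=> E; rewrite E in Hm.
rewrite -{1}(act_rev_cancel (alt t s (m s t)) x) -act_cat rev_alt -alt_cat addnn -mul2n.
exact: act_alt_period.
Qed.

Lemma act_coxeq u v : coxeq m u v -> act u = act v.
Proof.
elim=> // {u v} [u v w _ -> _ ->|u v s|u v s t Hm] //;
  apply: functional_extensionality => x; rewrite !act_cat /=.
- by rewrite refl_invol.
- by rewrite act_braid.
Qed.

End Geometric.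

(* The proof is by induction on l(w), factoring w through the
   dihedral parabolic subgroup generated by s and the last letter t of w. *)
Section Roots.
Variables (T : finType) (m : T -> T -> nat).
Hypothesis hm : coxeter_matrix m.
Local Notation len := (len m).
Local Notation act := (act m).
Local Notation coxeq := (coxeq m).
Local Open Scope R_scope.

Local Notation ascent := (ascent m).

Definition pos (x : vec T) := forall r, 0 <= x r.
Definition neg (x : vec T) := forall r, x r <= 0.

Definition in2 (s t : T) : pred T := fun r => (r == s) || (r == t).

Fixpoint noadj (u : seq T) : bool :=
  if u is a :: u' then (if u' is b :: _ then (a != b) && noadj u' else true) else true.

Lemma noadj_dec u : ~~ noadj u -> exists p q a, u = p ++ [:: a; a] ++ q.
Proof.
elim: u => //= a [|b u] IH //; rewrite negb_and negbK => /orP [/eqP <-|/IH [p [q [c ->]]]].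
- by exists [::], u, a.
- by exists (a :: p), q, c.
Qed.

Lemma alt_end_char (s t : T) u : s != t -> all (in2 s t) u -> noadj u ->
  last t u = t -> u = alt_end s t (size u).
Proof.
move=> st; elim: u => //= a u IH /andP [Ha Hall] Hna Hl.
case: u IH Hall Hna Hl => [|b u] IH Hall Hna Hl; first by rewrite /= in Hl; rewrite Hl.
case/andP: Hna => ab Hna; have E := IH Hall Hna Hl.
rewrite /= in E *; rewrite alt_endS E alt_endS /=.
have Hb : b = (if odd (size u) then s else t) by move: E; rewrite alt_endS => -[].
rewrite Hb in ab; move: Ha ab; rewrite /in2.
by case: (odd (size u)) => /= /orP [] /eqP ->; rewrite ?eqxx.
Qed.

Lemma alt_end_braid s t : (0 < m s t)%N ->
  exists r, coxeq (alt_end s t (m s t)) (rcons r s) /\ size r = (m s t).-1.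
Proof.
move=> HM; rewrite /alt_end.
have [M' EM] : exists M', m s t = M'.+1 by case: (m s t) HM => // M' _; exists M'.
set a := if odd (m s t) then t else s; set b := if odd (m s t) then s else t.
have mab : m a b = m s t by rewrite /a /b; case: (odd _); rewrite // (proj1 (proj2 hm)).
have := @coxeq_braid T m [::] [::] a b; rewrite mab /= !cats0 => /(_ HM).
rewrite EM [alt b a _]alt_rcons.
have -> : (if odd M' then a else b) = s by rewrite /a /b EM /=; case: (odd M').
by exists (alt b a M'); rewrite size_alt.
Qed.

Lemma reduced_dihedral_word (s t : T) u : s != t -> all (in2 s t) u ->
  reduced m (u ++ [:: s]) -> u = alt_end s t (size u) /\ (m s t = 0%N \/ (size u < m s t)%N).
Proof.
move=> st Hu Hred.
have shorter v : coxeq (u ++ [:: s]) v -> (size v <= size u)%N -> False.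
  by move=> /Hred; rewrite size_cat addn1 => H1 H2; have := leq_trans H1 H2; rewrite ltnn.
have Hna : noadj u.
  apply/negPn/negP => /noadj_dec [p [q [a Eu]]]; apply: (shorter ((p ++ q) ++ [:: s])).
  - by rewrite Eu -!catA; exact: coxeq_sq.
  - by rewrite Eu !size_cat /= addn1 !addnS ltnW.
have Hlast : last t u = t.
  case: (lastP u) Hu shorter => [//|u0 a]; rewrite all_rcons last_rcons => /andP [Ha _] shorter.
  case/orP: Ha => /eqP Ea //; case: (shorter u0); last by rewrite size_rcons.
  by rewrite Ea -cats1; exact: coxeq_sq_r.
have Hew := alt_end_char st Hu Hna Hlast; split=> //.
case: (m s t =P 0%N) => [|m0]; [by left|right]; rewrite ltnNge; apply/negP => Hk.
have HM : (0 < m s t)%N by rewrite lt0n; apply/eqP.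
have [r [Er Hr]] := alt_end_braid HM.
set p := take (size u - m s t) u.
have Eu : u = p ++ alt_end s t (m s t).
  rewrite -{1}(cat_take_drop (size u - m s t) u); congr (_ ++ _).
  by rewrite [X in drop _ X]Hew drop_alt_end subKn.
apply: (shorter (p ++ r)).
- rewrite {1}Eu -catA; apply: coxeq_trans (coxeq_catl _ (coxeq_catr _ Er)) _.
  by rewrite -cats1 -catA; apply: coxeq_catl; rewrite catA; exact: coxeq_sq_r.
- have := congr1 size Eu; rewrite !size_cat size_alt_end Hr => ->.
  by rewrite leq_add2l leq_pred.
Qed.

(* Among the factorizations with l(x) + |u| = l(w), x is taken
   of minimal length. *)
Lemma dihedral_factor w v s t : coxeq w (rcons v t) -> size (rcons v t) = len w ->
  ascent w s -> exists x u,
  [/\ all (in2 s t) u, coxeq (x ++ u) w, (len x < len w)%N,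
      ascent x s /\ ascent x t & reduced m (u ++ [:: s])].
Proof.
move=> Hwv Hsz Hws; set n := len w.
pose fact x := exists u, [/\ all (in2 s t) u, coxeq (x ++ u) w & (len x + size u)%N = n].
have len_v : (len v).+1 = n.
  have Hn : n = (size v).+1 by rewrite /n -Hsz size_rcons.
  have := len_size m v; have := len_cat m v [:: t].
  rewrite cats1 (len_coxeq (coxeq_sym Hwv)) -/n len_single addn1 Hn => H1 H2.
  by apply/eqP; rewrite eqn_leq ltnS H2 H1.
have Hv : fact v.
  exists [:: t]; split; first by rewrite /= /in2 eqxx orbT.
  - by rewrite cats1; exact: coxeq_sym.
  - by rewrite addn1.
have Ex : exists k, pb (exists x, fact x /\ len x = k) by exists (len v); apply/pbP; exists v.
case: (ex_minnP Ex) => k /pbP [x [[u [Hu Hxu Hn]] <-]] Hmin.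
have min_x y : fact y -> (len x <= len y)%N by move=> Hy; apply: Hmin; apply/pbP; exists y.
have asc r : in2 s t r -> ascent x r.
  move=> Hr; apply/negPn/negP => /len_desc_eq Hd.
  have : fact (x ++ [:: r]).
    exists (r :: u); split; first by rewrite /= Hr.
    - by apply: coxeq_trans Hxu; rewrite -catA; exact: coxeq_sq.
    - by rewrite /= addnS -addSn Hd.
  by move/min_x; rewrite -Hd ltnn.
exists x, u; split=> //; first by rewrite -len_v ltnS min_x.
  by split; apply: asc; rewrite /in2 eqxx ?orbT.
apply/reducedE/eqP; rewrite eqn_leq len_size andbT -(leq_add2l (len x)) size_cat addn1 addnS Hn.
rewrite -(len_asc_eq Hws) -/n (len_coxeq (coxeq_catr [:: s] (coxeq_sym Hxu))) -catA.
by rewrite len_cat.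
Qed.

Lemma pos_comb a b x y : 0 <= a -> 0 <= b -> pos x -> pos y -> pos (vadd (vscale a x) (vscale b y)).
Proof. by move=> Ha Hb Hx Hy r; have := Hx r; have := Hy r; rewrite /vadd /vscale; nra. Qed.

Theorem root_pos w s : ascent w s -> pos (act w (alpha s)).
Proof.
move Hn: (len w) => n; elim/ltn_ind: n w s Hn => n IH w s Hn Hws.
have [v [Hwv Hv]] := len_spec m w.
case/lastP: v Hwv Hv => [|v t] Hwv Hv.
  by rewrite (act_coxeq hm Hwv) => r; rewrite /= /alpha; case: (r == s); lra.
have st : s != t.
  apply/eqP => Est; move: Hws; rewrite /ascent Est -Hv size_rcons.
  rewrite (len_coxeq (coxeq_catr _ Hwv)) -cats1 (len_coxeq (coxeq_sq_r m v t)) => H.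
  by have := leq_trans H (len_size m v); rewrite ltnNge leqW.
have [x [u [Hu Hxu Hx [Hxs Hxt] Hred]]] := dihedral_factor Hwv Hv Hws.
have [Eu Hk] := reduced_dihedral_word st Hu Hred.
rewrite -(act_coxeq hm Hxu) act_cat Eu act_alt_end // act_add !act_scale; apply: pos_comb.
- by apply: cheb_nonneg => //; case: Hk; tauto.
- by apply: cheb_nonneg => //; case: Hk => [|/ltnW]; tauto.
- by apply: (IH (len x)); rewrite -?Hn //; case: (odd _).
- by apply: (IH (len x)); rewrite -?Hn //; case: (odd _).
Qed.

End Roots.

Section Cones.
Variables (T : finType) (m : T -> T -> nat).
Hypothesis hm : coxeter_matrix m.
Local Notation len := (len m).
Local Notation act := (act m).
Local Notation ascent := (ascent m).
Local Open Scope R_scope.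

Definition zv : vec T := fun _ => 0.

Lemma act_zero w : act w zv = zv.
Proof.
have -> : zv = vscale 0 zv by apply: functional_extensionality => r; rewrite /vscale /zv; lra.
by rewrite act_scale; apply: functional_extensionality => r; rewrite /vscale /zv; lra.
Qed.

(* w(alpha_s) is never zero since w is invertible. *)
Lemma act_nonzero w s : exists r, act w (alpha s) r <> 0.
Proof.
apply: NNPP => H.
have E : act w (alpha s) = zv.
  by apply: functional_extensionality => r; apply: NNPP => H1; apply: H; exists r.
have := act_rev_cancel m w (alpha s); rewrite E act_zero => /(congr1 (fun f => f s)).
by rewrite /zv /alpha eqxx; lra.
Qed.

(* At a descent, w(alpha_s) = - (ws)(alpha_s) is nonpositive. *)
Lemma neg_desc w s : ~~ ascent w s -> neg (act w (alpha s)).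
Proof.
move=> Hd; have Ha : ascent (w ++ [:: s]) s.
  by rewrite /ascent (len_coxeq (coxeq_sq_r m w s)) -(len_desc_eq Hd).
move=> r; have := root_pos hm Ha r.
rewrite act_cat /= refl_alpha act_scale /vscale; lra.
Qed.

Lemma pos_neg_zero (x : vec T) : pos x -> neg x -> forall r, x r = 0.
Proof. by move=> H1 H2 r; have := H1 r; have := H2 r; lra. Qed.

Lemma ascent_of_pos w s : pos (act w (alpha s)) -> ascent w s.
Proof.
move=> P; apply/negPn/negP => /neg_desc N.
by have [r []] := act_nonzero w s; exact: pos_neg_zero.
Qed.

Lemma descent_of_neg w s : neg (act w (alpha s)) -> ~~ ascent w s.
Proof.
move=> N; apply/negP => /(root_pos hm) P.
by have [r []] := act_nonzero w s; exact: pos_neg_zero.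
Qed.

Definition supp (Y : {set T}) (x : vec T) := forall r, r \notin Y -> x r = 0.

Lemma supp_alpha (Y : {set T}) q : q \in Y -> supp Y (alpha q).
Proof. by move=> Hq r Hr; rewrite /alpha; case: eqP => // E; rewrite E Hq in Hr. Qed.

Lemma act_supp (Y : {set T}) y x : all (mem Y) y -> supp Y x -> supp Y (act y x).
Proof.
elim: y => //= q y IH /andP [Hq Hy] Hx r Hr.
rewrite /refl IH // /alpha; case: eqP => [E|_]; last lra.
by rewrite -E (negbTE Hr) in Hq.
Qed.

Lemma act_cone (Q : vec T -> Prop) u (Y : {set T}) x :
  Q zv -> (forall a b, Q a -> Q b -> Q (vadd a b)) ->
  (forall k a, 0 <= k -> Q a -> Q (vscale k a)) ->
  (forall q, q \in Y -> Q (act u (alpha q))) -> supp Y x -> pos x -> Q (act u x).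
Proof.
move=> Q0 Qadd Qsc Qa HY Hp.
suff H (l : seq T) : (forall r, r \notin l -> x r = 0) -> Q (act u x).
  by apply: (H (enum T)) => r; rewrite mem_enum.
elim: l x HY Hp => [|q l IH] {}x HY Hp Hl.
  have -> : x = zv by apply: functional_extensionality => r; exact: Hl.
  by rewrite act_zero.
set x' := fun r => if r == q then 0 else x r.
have -> : x = vadd (vscale (x q) (alpha q)) x'.
  by apply: functional_extensionality => r; rewrite /vadd /vscale /alpha /x'; case: eqP => [->|_]; lra.
rewrite act_add act_scale; apply: Qadd.
- case: (boolP (q \in Y)) => Hq; first exact: Qsc (Hp q) (Qa q Hq).
  have -> : vscale (x q) (act u (alpha q)) = zv.
    by apply: functional_extensionality => r; rewrite /vscale /zv (HY q Hq); lra.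
  exact: Q0.
- apply: IH.
  + by move=> r Hr; rewrite /x'; case: eqP => // _; exact: HY.
  + by move=> r; rewrite /x'; case: eqP => _; [lra|exact: Hp].
  + move=> r Hr; rewrite /x'; case: eqP => // Hrq; apply: Hl.
    by rewrite in_cons negb_or Hr andbT; apply/eqP.
Qed.

Lemma act_cone_pos u (Y : {set T}) x :
  (forall q, q \in Y -> pos (act u (alpha q))) -> supp Y x -> pos x -> pos (act u x).
Proof.
apply: act_cone => [r|a b Ha Hb r|k a Hk Ha r]; rewrite /zv /vadd /vscale //; first lra.
- by have := Ha r; have := Hb r; lra.
- by have := Ha r; nra.
Qed.

Lemma act_cone_neg u (Y : {set T}) x :
  (forall q, q \in Y -> neg (act u (alpha q))) -> supp Y x -> pos x -> neg (act u x).
Proof.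
apply: act_cone => [r|a b Ha Hb r|k a Hk Ha r]; rewrite /zv /vadd /vscale //; first lra.
- by have := Ha r; have := Hb r; lra.
- by have := Ha r; nra.
Qed.

Lemma neg_flip (x : vec T) : neg x -> pos (vscale (-1) x).
Proof. by move=> H r; have := H r; rewrite /vscale; lra. Qed.

Lemma supp_flip (Y : {set T}) x : supp Y x -> supp Y (vscale (-1) x).
Proof. by move=> H r Hr; rewrite /vscale H //; lra. Qed.

Lemma len_cat_ascents u (Y : {set T}) : (forall r, r \in Y -> ascent u r) ->
  forall y, all (mem Y) y -> len (u ++ y) = (len u + len y)%N.
Proof.
move=> Hu; elim/last_ind => [|y r IH]; first by rewrite cats0 len_nil addn0.
rewrite all_rcons => /andP [Hr Hy]; have {}IH := IH Hy.
have Hpu q : q \in Y -> pos (act u (alpha q)) by move/Hu; exact: root_pos.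
have Hs : supp Y (act y (alpha r)) by apply: act_supp => //; exact: supp_alpha.
rewrite -cats1 catA; case: (boolP (ascent y r)) => Ha.
- have P : pos (act (u ++ y) (alpha r)) by rewrite act_cat; exact: act_cone_pos Hs (root_pos hm Ha).
  by rewrite (len_asc_eq (ascent_of_pos P)) (len_asc_eq Ha) IH addnS.
- have N : neg (act (u ++ y) (alpha r)).
    rewrite act_cat => q; have := act_cone_pos Hpu (supp_flip Hs) (neg_flip (neg_desc Ha)) q.
    by rewrite act_scale /vscale; lra.
  have E1 := len_desc_eq (descent_of_neg N); have E2 := len_desc_eq Ha.
  by rewrite IH -E2 addnS in E1; case: E1.
Qed.

Lemma len_cat_descents v (Y : {set T}) : (forall r, r \in Y -> ~~ ascent v r) ->
  forall y, all (mem Y) y -> (len (v ++ y) + len y)%N = len v.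
Proof.
move=> Hv; elim/last_ind => [|y r IH]; first by rewrite cats0 len_nil addn0.
rewrite all_rcons => /andP [Hr Hy]; have {}IH := IH Hy.
have Hnv q : q \in Y -> neg (act v (alpha q)) by move/Hv; exact: neg_desc.
have Hs : supp Y (act y (alpha r)) by apply: act_supp => //; exact: supp_alpha.
rewrite -cats1 catA; case: (boolP (ascent y r)) => Ha.
- have N : neg (act (v ++ y) (alpha r)) by rewrite act_cat; exact: act_cone_neg Hs (root_pos hm Ha).
  have E1 := len_desc_eq (descent_of_neg N).
  by rewrite (len_asc_eq Ha) -IH -E1 addnS addSn.
- have P : pos (act (v ++ y) (alpha r)).
    rewrite act_cat => q; have := act_cone_neg Hnv (supp_flip Hs) (neg_flip (neg_desc Ha)) q.
    by rewrite act_scale /vscale; lra.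
  have E1 := len_asc_eq (ascent_of_pos P); have E2 := len_desc_eq Ha.
  by rewrite E1 -IH -E2 addnS addSn.
Qed.

End Cones.

Section CanonicalWords.
Variables (T : finType) (m : T -> T -> nat).
Local Notation len := (len m).
Local Notation coxeq := (coxeq m).
Local Notation inWX := (inWX m).

Lemma inWX_coxeq (X : {set T}) u v : coxeq u v -> inWX X u -> inWX X v.
Proof. by move=> H [w [Hw HX]]; exists w; split=> //; exact: coxeq_trans (coxeq_sym H) Hw. Qed.

Lemma inWX_cat (X : {set T}) u v : inWX X u -> inWX X v -> inWX X (u ++ v).
Proof.
move=> [u0 [H1 H2]] [v0 [H3 H4]]; exists (u0 ++ v0).
by rewrite all_cat H2 H4; split=> //; exact: coxeq_cat.
Qed.

Lemma inWX_rev (X : {set T}) u : inWX X u -> inWX X (rev u).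
Proof. by move=> [u0 [H1 H2]]; exists (rev u0); rewrite all_rev; split=> //; exact: coxeq_rev. Qed.

Lemma inWX_word (X : {set T}) u : all (mem X) u -> inWX X u.
Proof. by exists u; split=> //; exact: coxeq_refl. Qed.

Lemma inWX_sub (X Y : {set T}) u : X \subset Y -> inWX X u -> inWX Y u.
Proof. by move=> /subsetP S [u0 [H1 /allP H2]]; exists u0; split=> //; apply/allP => r /H2 /S. Qed.

Definition canon (w : seq T) : seq T :=
  epsilon (inhabits [::]) (fun v => coxeq w v /\ size v = len w).

Lemma canon_spec w : coxeq w (canon w) /\ size (canon w) = len w.
Proof. exact: (epsilon_spec (inhabits [::]) (fun v => coxeq w v /\ size v = len w) (len_spec m w)). Qed.

Lemma canon_coxeq w : coxeq w (canon w).
Proof. exact: (proj1 (canon_spec w)). Qed.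

Lemma size_canon w : size (canon w) = len w.
Proof. exact: (proj2 (canon_spec w)). Qed.

Lemma canon_eq u v : coxeq u v -> canon u = canon v.
Proof.
move=> H; rewrite /canon (len_coxeq H); congr epsilon.
apply: functional_extensionality => x; apply: propositional_extensionality.
by split=> -[H1 H2]; split=> //; [exact: coxeq_trans (coxeq_sym H) H1|exact: coxeq_trans H H1].
Qed.

Lemma canon_idem w : canon (canon w) = canon w.
Proof. exact/esym/canon_eq/canon_coxeq. Qed.

Lemma canon_size x : canon x = x -> size x = len x.
Proof. by move=> H; rewrite -{1}H size_canon. Qed.

Lemma coxeq_canon_eq x y : canon x = x -> canon y = y -> coxeq x y -> x = y.
Proof. by move=> Hx Hy /canon_eq; rewrite Hx Hy. Qed.

Lemma canon_nil : canon [::] = [::].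
Proof. by apply: size0nil; rewrite size_canon len_nil. Qed.

Definition words n : seq (seq T) := [seq val t | t <- enum {: n.-tuple T}].

Lemma mem_words n w : (w \in words n) = (size w == n).
Proof.
apply/mapP/eqP => [[t _ ->]|H]; first exact: size_tuple.
by exists (Tuple (introT eqP H)); rewrite ?mem_enum.
Qed.

Lemma uniq_words n : uniq (words n).
Proof. by rewrite map_inj_uniq; [exact: enum_uniq|exact: val_inj]. Qed.

Definition canon_words (P : pred (seq T)) n := [seq x <- words n | (canon x == x) && P x].

Lemma mem_canon_words P n x :
  (x \in canon_words P n) = [&& size x == n, canon x == x & P x].
Proof. by rewrite mem_filter mem_words andbC andbA. Qed.

Lemma uniq_canon_words P n : uniq (canon_words P n).
Proof. exact/filter_uniq/uniq_words. Qed.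

Definition inWXb (X : {set T}) w := pb (inWX X w).

Lemma growth_canon_words (X : {set T}) n : growth m X n = size (canon_words (inWXb X) n).
Proof.
rewrite /growth.
set cls := fun w : n.-tuple T => [set v : n.-tuple T | pb (coxeq (tval w) (tval v))].
set A := [set w : n.-tuple T | _].
set A' := [set w : n.-tuple T | (canon w == w) && inWXb X w].
have clsP (w v : n.-tuple T) : (v \in cls w) = pb (coxeq w v) by rewrite inE.
have -> : cls @: A = cls @: A'.
  apply/setP => c; apply/imsetP/imsetP => -[w Hw ->].
  - move: Hw; rewrite inE => /pbP [/reducedE Hr Hin].
    have Hs : size (canon w) == n by rewrite size_canon -Hr size_tuple.
    exists (Tuple Hs).
      by rewrite inE /= canon_idem eqxx; apply/pbP; exact: inWX_coxeq (canon_coxeq w) Hin.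
    apply/setP => v; rewrite !clsP; apply/pbP/pbP => /= H.
    + exact: coxeq_trans (coxeq_sym (canon_coxeq w)) H.
    + exact: coxeq_trans (canon_coxeq w) H.
  - exists w => //; move: Hw; rewrite !inE => /andP [/eqP /canon_size Hc /pbP Hin].
    by apply/pbP; split=> //; apply/reducedE.
rewrite card_in_imset; last first.
  move=> w1 w2; rewrite !inE => /andP [/eqP H1 _] /andP [/eqP H2 _] Hc; apply: val_inj.
  have : w2 \in cls w1 by rewrite Hc clsP; apply/pbP; exact: coxeq_refl.
  by rewrite clsP => /pbP; apply: coxeq_canon_eq.
rewrite cardE -(size_map val); apply/perm_size/uniq_perm.
- by rewrite map_inj_uniq; [exact: enum_uniq|exact: val_inj].
- exact: uniq_canon_words.
- move=> x; rewrite mem_canon_words; apply/mapP/idP => [[t]|/and3P [/eqP Hs Hc HX]].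
  + by rewrite mem_enum inE => /andP [Hc HX] ->; rewrite size_tuple eqxx Hc.
  + by exists (Tuple (introT eqP Hs)); rewrite // mem_enum inE /= Hc.
Qed.

End CanonicalWords.

Section Factorization.
Variables (T : finType) (m : T -> T -> nat).
Hypothesis hm : coxeter_matrix m.
Local Notation len := (len m).
Local Notation coxeq := (coxeq m).
Local Notation inWX := (inWX m).
Local Notation canon := (canon m).
Local Notation canon_words := (canon_words m).
Local Notation inWXb := (inWXb m).

Definition ascents (Y : {set T}) (x : seq T) : bool := [forall r in Y, ascent m x r].

Lemma ascentsP (Y : {set T}) x : reflect (forall r, r \in Y -> ascent m x r) (ascents Y x).
Proof. exact: forall_inP. Qed.

Lemma ascents_coxeq (Y : {set T}) u v : coxeq u v -> ascents Y u = ascents Y v.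
Proof.
move=> H; apply/ascentsP/ascentsP => Ha r /Ha; rewrite /ascent.
- by rewrite (len_coxeq H) (len_coxeq (coxeq_catr [:: r] H)).
- by rewrite -(len_coxeq H) -(len_coxeq (coxeq_catr [:: r] H)).
Qed.

Lemma len_cat_coset (Y : {set T}) a b : ascents Y a -> inWX Y b -> len (a ++ b) = len a + len b.
Proof.
move=> /ascentsP Ha [y [Hy HYy]].
by rewrite (len_coxeq (coxeq_catl a Hy)) (len_coxeq Hy); exact: (len_cat_ascents hm Ha).
Qed.

Lemma coset_factor_unique (Y : {set T}) a a' b b' :
  ascents Y a -> ascents Y a' -> inWX Y b -> inWX Y b' ->
  coxeq (a ++ b) (a' ++ b') -> coxeq a a' /\ coxeq b b'.
Proof.
(* a = a' (b' b^-1) with l(a) = l(a') + l(b' b^-1), and symmetrically *)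
have key a1 a1' b1 b1' : ascents Y a1' -> inWX Y b1 -> inWX Y b1' ->
    coxeq (a1 ++ b1) (a1' ++ b1') ->
    coxeq a1 (a1' ++ (b1' ++ rev b1)) /\ len a1 = len a1' + len (b1' ++ rev b1).
  move=> H1' Hb1 Hb1' E.
  have C : coxeq a1 (a1' ++ (b1' ++ rev b1)).
    have C1 : coxeq a1 ((a1 ++ b1) ++ rev b1).
      by rewrite -catA -{1}(cats0 a1); apply/coxeq_catl/coxeq_sym; exact: coxeq_rev_cancel.
    by apply: coxeq_trans C1 _; rewrite catA; exact: coxeq_catr.
  split=> //; rewrite (len_coxeq C); apply: len_cat_coset H1' _.
  exact/inWX_cat/inWX_rev.
move=> Ha Ha' Hb Hb' H.
have [C1 L1] := key _ _ _ _ Ha' Hb Hb' H.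
have [C2 L2] := key _ _ _ _ Ha Hb' Hb (coxeq_sym H).
have Z : len (b' ++ rev b) = 0.
  move: L1 L2 => ->; rewrite -addnA -[X in X = _]addn0 => /addnI /esym /eqP.
  by rewrite addn_eq0 => /andP [/eqP].
have Ca : coxeq a a'.
  by apply: coxeq_trans C1 _; rewrite -{2}(cats0 a'); apply/coxeq_catl/len0.
split=> //.
have E : coxeq ((rev a ++ a) ++ b) ((rev a ++ a) ++ b').
  by rewrite -!catA; apply: coxeq_catl; apply: coxeq_trans H _; exact/coxeq_catr/coxeq_sym.
have Cr := coxeq_rev_cancel' m a.
exact: coxeq_trans (coxeq_catr b (coxeq_sym Cr)) (coxeq_trans E (coxeq_catr b' Cr)).
Qed.

(* Existence: take a of minimal length in the coset g W_Y. *)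
Lemma coset_factor_exists (Y : {set T}) x : exists a b, [/\ coxeq x (a ++ b), ascents Y a & inWX Y b].
Proof.
have Ex : exists k, pb (exists a b, [/\ coxeq x (a ++ b), inWX Y b & len a = k]).
  exists (len x); apply/pbP; exists x, [::]; rewrite cats0.
  by split=> //; [exact: coxeq_refl|exact: inWX_word].
case: (ex_minnP Ex) => k /pbP [a [b [H1 H2 <-]]] Hmin.
exists a, b; split => //; apply/ascentsP => r Hr; apply/negPn/negP => /len_desc_eq Hd.
have : len a <= len (a ++ [:: r]).
  apply: Hmin; apply/pbP; exists (a ++ [:: r]), (r :: b); split => //.
  - by apply: coxeq_trans H1 _; rewrite -catA; exact/coxeq_sym/coxeq_sq.
  - by apply: (@inWX_cat _ _ _ [:: r]) H2; apply: inWX_word; rewrite /= Hr.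
by rewrite -Hd ltnn.
Qed.

Definition min_reps (X Y : {set T}) n := canon_words (fun x => inWXb X x && ascents Y x) n.

Section Counting.
Variables (X Y : {set T}).
Hypothesis YX : Y \subset X.

Definition coset_reps n := flatten [seq min_reps X Y i | i <- iota 0 n.+1].

Definition factor_words n :=
  [seq canon (a ++ b) | a <- coset_reps n, b <- canon_words (inWXb Y) (n - size a)].

Lemma size_min_reps i x : x \in min_reps X Y i -> size x = i.
Proof. by rewrite mem_canon_words => /andP [/eqP]. Qed.

Lemma mem_coset_reps n a : a \in coset_reps n ->
  [/\ size a <= n, canon a = a, inWX X a & ascents Y a].
Proof.
move=> /flattenP [s /mapP [i Hi ->]]; rewrite mem_canon_words.
case/and3P => /eqP Hs /eqP Hc /andP [/pbP HX HY].
by split => //; rewrite Hs; move: Hi; rewrite mem_iota.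
Qed.

Lemma uniq_coset_reps n : uniq (coset_reps n).
Proof.
rewrite /coset_reps; elim: n.+1 0 => [|j IH] k //=.
rewrite cat_uniq uniq_canon_words IH andbT /=; apply/hasPn => x /flattenP [s /mapP [i Hi ->] Hx].
apply/negP => Hk; move: Hi; rewrite -(size_min_reps Hx) (size_min_reps Hk).
by rewrite mem_iota ltnn.
Qed.

Lemma uniq_factor_words n : uniq (factor_words n).
Proof.
apply: (@allpairs_uniq_dep _ (fun _ => seq T)) => [|a _|]; first exact: uniq_coset_reps.
  exact: uniq_canon_words.
move=> [a1 b1] [a2 b2] /allpairsPdep [a1' [b1' [Ha1 Hb1 [-> ->]]]].
move=> /allpairsPdep [a2' [b2' [Ha2 Hb2 [-> ->]]]] /= Hc.
have [_ Hc1 _ HY1] := mem_coset_reps Ha1; have [_ Hc2 _ HY2] := mem_coset_reps Ha2.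
move: Hb1 Hb2; rewrite !mem_canon_words => /and3P [_ /eqP Hcb1 /pbP Hb1] /and3P [_ /eqP Hcb2 /pbP Hb2].
have C : coxeq (a1' ++ b1') (a2' ++ b2').
  by apply: coxeq_trans (canon_coxeq m _) _; rewrite Hc; exact: coxeq_sym (canon_coxeq m _).
have [Ca Cb] := coset_factor_unique HY1 HY2 Hb1 Hb2 C.
by rewrite (coxeq_canon_eq Hc1 Hc2 Ca) (coxeq_canon_eq Hcb1 Hcb2 Cb).
Qed.

Lemma mem_factor_words n x : (x \in factor_words n) = (x \in canon_words (inWXb X) n).
Proof.
apply/allpairsPdep/idP.
- move=> [a [b [Ha Hb ->]]]; have [Hsa Hca HXa HYa] := mem_coset_reps Ha.
  move: Hb; rewrite mem_canon_words => /and3P [/eqP Hsb /eqP Hcb /pbP Hb].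
  rewrite mem_canon_words canon_idem eqxx size_canon (len_cat_coset HYa Hb).
  rewrite -(canon_size Hca) -(canon_size Hcb) Hsb subnKC // eqxx /=.
  apply/pbP; apply: inWX_coxeq (canon_coxeq m _) _; apply: inWX_cat HXa _.
  exact: inWX_sub YX Hb.
- rewrite mem_canon_words => /and3P [/eqP Hs /eqP Hc /pbP Hx].
  have [a [b [Cx Ha Hb]]] := coset_factor_exists Y x.
  have Hl := len_cat_coset Ha Hb; rewrite -(len_coxeq Cx) -(canon_size Hc) Hs in Hl.
  exists (canon a), (canon b); split.
  + apply/flattenP; exists (min_reps X Y (len a)).
      by apply/mapP; exists (len a); rewrite // mem_iota /= add0n ltnS Hl leq_addr.
    rewrite mem_canon_words size_canon eqxx canon_idem eqxx /=.
    rewrite -(ascents_coxeq _ (canon_coxeq m a)) Ha andbT; apply/pbP.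
    apply: inWX_coxeq (canon_coxeq m a) _.
    have Ca : coxeq (x ++ rev b) a.
      apply: coxeq_trans (coxeq_catr _ Cx) _; rewrite -catA -{2}(cats0 a).
      apply: coxeq_catl; exact: coxeq_rev_cancel.
    by apply: inWX_coxeq Ca _; apply: inWX_cat Hx _; apply: inWX_rev; exact: inWX_sub YX Hb.
  + rewrite mem_canon_words canon_idem eqxx !size_canon Hl addKn eqxx /=.
    by apply/pbP; apply: inWX_coxeq Hb; exact: canon_coxeq.
  + by rewrite -Hc; apply: canon_eq; apply: coxeq_trans Cx _; apply: coxeq_cat; exact: canon_coxeq.
Qed.

Theorem growth_factor n :
  growth m X n = \sum_(i < n.+1) size (min_reps X Y i) * growth m Y (n - i).
Proof.
have P : perm_eq (canon_words (inWXb X) n) (factor_words n).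
  apply: uniq_perm; [exact: uniq_canon_words|exact: uniq_factor_words|].
  by move=> x; rewrite mem_factor_words.
rewrite growth_canon_words (perm_size P) size_allpairs_dep sumnE.
rewrite (big_map (fun a => size (canon_words (inWXb Y) (n - size a))) xpredT id).
rewrite /coset_reps big_flatten big_map.
rewrite -(big_mkord xpredT (fun i => size (min_reps X Y i) * growth m Y (n - i))) /index_iota subn0.
apply: eq_big_seq => i _; rewrite growth_canon_words.
rewrite (eq_big_seq (fun _ => size (canon_words (inWXb Y) (n - i)))) => [|a /size_min_reps -> //].
by rewrite big_const_seq count_predT iter_addn_0 mulnC.
Qed.

End Counting.
End Factorization.

Import GRing.Theory.
Local Open Scope ring_scope.

(* Inclusion-exclusion: when W_X is infinite, every g in W_X has an ascent at
   some r in X (an element with all descents in X bounds the length of all of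
   W_X), hence \sum_(Y \subset X) (-1)^|Y| #{minimal W_Y-representatives of
   length n} = 0 for every n. *)
Section InclusionExclusion.
Variables (T : finType) (m : T -> T -> nat).
Hypothesis hm : coxeter_matrix m.
Local Notation len := (len m).
Local Notation coxeq := (coxeq m).
Local Notation canon := (canon m).
Local Notation canon_words := (canon_words m).
Local Notation inWXb := (inWXb m).
Local Notation min_reps := (min_reps m).
Local Notation ascents := (ascents m).

(* If v has a descent at every r in X, then every element of W_X has length
   at most l(v); so W_X is finite. *)
Lemma descents_finite (X : {set T}) v : (forall r, r \in X -> ~~ ascent m v r) -> WX_finite m X.
Proof.
move=> Hv; exists (flatten [seq words T k | k <- iota 0 (len v).+1]) => w [y [Cy Hy]].
exists (canon w); last exact: canon_coxeq.
apply/flattenP; exists (words T (size (canon w))); last by rewrite mem_words.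
apply/mapP; exists (size (canon w)) => //; rewrite mem_iota /= add0n ltnS.
by rewrite size_canon (len_coxeq Cy) -(len_cat_descents hm Hv Hy) leq_addl.
Qed.

Lemma size_min_reps_self (X : {set T}) n : size (min_reps X X n) = (n == 0)%N.
Proof.
have only_nil x : x \in min_reps X X n -> x = [::] /\ n = 0%N.
  rewrite mem_canon_words => /and3P [/eqP Hs /eqP Hc /andP [/pbP Hx Ha]].
  have [y [Cy Hy]] := inWX_rev Hx.
  have C : coxeq (x ++ y) [::].
    exact: coxeq_trans (coxeq_catl _ (coxeq_sym Cy)) (coxeq_rev_cancel m x).
  have := len_cat_coset hm Ha (inWX_word m Hy); rewrite (len_coxeq C) len_nil.
  move=> /esym /eqP; rewrite addn_eq0 => /andP [/eqP Hl _].
  have Hs0 : size x = 0%N by rewrite (canon_size Hc) Hl.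
  by split; [exact: size0nil|rewrite -Hs].
case: n only_nil => [|n] only_nil; last first.
  by case E: (min_reps X X n.+1) => [//|x l]; have := only_nil x; rewrite E mem_head => /(_ isT) [].
suff /perm_size -> : perm_eq (min_reps X X 0) [:: [::]] by [].
apply: uniq_perm => //; first exact: uniq_canon_words.
move=> x; rewrite inE; apply/idP/eqP => [/only_nil []//|->].
rewrite mem_canon_words /= canon_nil eqxx /=; apply/andP; split; first by apply/pbP; exact: inWX_word.
by apply/ascentsP => r _; rewrite /ascent /= len_single len_nil.
Qed.

Lemma alternating_sum_subsets (A : {set T}) :
  A != set0 -> \sum_(Y : {set T} | Y \subset A) (-1) ^+ #|Y| = 0 :> rat.
Proof.
case/set0Pn => a Ha.
rewrite (bigID (fun Y : {set T} => a \in Y)) /=.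
rewrite (reindex_onto (fun Z : {set T} => a |: Z) (fun Y : {set T} => Y :\ a)) /=; last first.
  by move=> Y /andP [_ HY]; rewrite setD1K.
set S1 := \sum_(_ | _) _; set S2 := \sum_(_ | _) _.
suff -> : S1 = \sum_(Z : {set T} | (Z \subset A) && (a \notin Z)) (- (-1) ^+ #|Z|).
  by rewrite /S2 sumrN addNr.
apply: eq_big => Z.
- rewrite subUset sub1set Ha setU11 /= andbT; apply/andP/andP => [[HZ /eqP E]|[HZ HaZ]].
  + by rewrite HZ -E setD11.
  + by rewrite HZ setU1K.
- move=> /andP [_ /eqP E]; have HaZ : a \notin Z by rewrite -E setD11.
  by rewrite cardsU1 HaZ /= add1n exprS mulN1r.
Qed.

Lemma natr_count (P : pred (seq T)) l : (count P l)%:R = \sum_(x <- l) (P x)%:R :> rat.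
Proof. by elim: l => [|x l IH]; rewrite ?big_nil // big_cons /= natrD IH. Qed.

Lemma size_min_reps_count (X Y : {set T}) n :
  size (min_reps X Y n) = count (ascents Y) (canon_words (inWXb X) n).
Proof.
rewrite size_filter count_filter; apply: eq_count => x /=.
by case: (canon x == x); case: (inWXb X x); case: (ascents Y x).
Qed.

Theorem inclusion_exclusion (X : {set T}) n : ~ WX_finite m X ->
  \sum_(Y : {set T} | Y \subset X) (-1) ^+ #|Y| * (size (min_reps X Y n))%:R = 0 :> rat.
Proof.
move=> Hinf.
under eq_bigr => Y _ do rewrite size_min_reps_count natr_count big_distrr /=.
rewrite exchange_big /=; apply: big1_seq => x _.
set Ax := [set r | ascent m x r].
have Hne : X :&: Ax != set0.
  apply/negP => /eqP E; apply: Hinf; apply: (@descents_finite X x) => r Hr.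
  apply/negP => Hasc; have : r \in X :&: Ax by rewrite !inE Hr Hasc.
  by rewrite E inE.
rewrite -[RHS](alternating_sum_subsets Hne) big_mkcond [RHS]big_mkcond.
apply: eq_bigr => Y _; rewrite subsetI.
have -> : ascents Y x = (Y \subset Ax).
  by apply/ascentsP/subsetP => H r Hr; [rewrite inE; exact: H|have := H r Hr; rewrite inE].
by case: (Y \subset X); case: (Y \subset Ax); rewrite /= ?mulr1 ?mulr0.
Qed.

End InclusionExclusion.

(* p and q have the same coefficients up to degree n: series identities are
   checked on truncations. *)
Definition trunc_eq n (p q : {poly rat}) := forall i, (i <= n)%N -> p`_i = q`_i.

Lemma trunc_eq_mull n (p p' q : {poly rat}) : trunc_eq n p p' -> trunc_eq n (p * q) (p' * q).
Proof.
move=> H i Hi; rewrite !coefM; apply: eq_bigr => j _; rewrite H //.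
by apply: leq_trans Hi; rewrite -ltnS.
Qed.

Lemma trunc_eq_mulr n (p q q' : {poly rat}) : trunc_eq n q q' -> trunc_eq n (p * q) (p * q').
Proof. by move=> H; rewrite ![p * _]mulrC; exact: trunc_eq_mull. Qed.

Lemma trunc_eq_trans n (p q r : {poly rat}) : trunc_eq n p q -> trunc_eq n q r -> trunc_eq n p r.
Proof. by move=> H1 H2 i Hi; rewrite H1 // H2. Qed.

Lemma trunc_eq_sym n (p q : {poly rat}) : trunc_eq n p q -> trunc_eq n q p.
Proof. by move=> H i Hi; rewrite H. Qed.

Lemma trunc_eq_sum n (I : Type) (r : seq I) (P : pred I) (F G : I -> {poly rat}) :
  (forall i, P i -> trunc_eq n (F i) (G i)) ->
  trunc_eq n (\sum_(i <- r | P i) F i) (\sum_(i <- r | P i) G i).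
Proof. by move=> H i Hi; rewrite !coef_sum; apply: eq_bigr => j /H ->. Qed.

Lemma trunc_eq_opp n (p q : {poly rat}) : trunc_eq n p q -> trunc_eq n (- p) (- q).
Proof. by move=> H i Hi; rewrite !coefN H. Qed.

Section Fractions.
Variables (T : finType) (m : T -> T -> nat).
Hypothesis hm : coxeter_matrix m.

Definition growth_poly n (X : {set T}) : {poly rat} := \poly_(i < n.+1) (growth m X i)%:R.
Definition reps_poly n (X Y : {set T}) : {poly rat} := \poly_(i < n.+1) (size (min_reps m X Y i))%:R.

Lemma fraction_trunc (X : {set T}) g L n :
  fraction_eq m X g L -> trunc_eq n (eps X *: L) (g * growth_poly n X).
Proof.
move=> H i Hi; rewrite coefZ H coefM; apply: eq_bigr => j _; rewrite coef_poly.
by rewrite ltnS (leq_trans (leq_subr _ _) Hi).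
Qed.

Lemma trunc_fraction (X : {set T}) g L :
  (forall n, trunc_eq n (eps X *: L) (g * growth_poly n X)) -> fraction_eq m X g L.
Proof.
move=> H n; have := H n n (leqnn n); rewrite coefZ => ->; rewrite coefM.
by apply: eq_bigr => j _; rewrite coef_poly ltnS leq_subr.
Qed.

Lemma growth_poly_factor (X Y : {set T}) n : Y \subset X ->
  trunc_eq n (growth_poly n X) (reps_poly n X Y * growth_poly n Y).
Proof.
move=> YX i Hi; rewrite coef_poly ltnS Hi (growth_factor hm YX) natr_sum coefM.
apply: eq_bigr => j _; rewrite natrM !coef_poly !ltnS (leq_trans (leq_subr _ _) Hi).
by rewrite (leq_trans _ Hi) // -ltnS.
Qed.

Lemma reps_poly_alternating (X : {set T}) n : ~ WX_finite m X ->
  trunc_eq n (\sum_(Y : {set T} | Y \proper X) eps Y *: reps_poly n X Y) (- (eps X) *: 1).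
Proof.
move=> Hinf i Hi; rewrite coef_sum coefZ coef1.
have := inclusion_exclusion hm i Hinf; rewrite (bigD1 X) //=.
have -> : \sum_(Y : {set T} | Y \proper X) (eps Y *: reps_poly n X Y)`_i =
          \sum_(Y : {set T} | (Y \subset X) && (Y != X)) (-1) ^+ #|Y| * (size (min_reps m X Y i))%:R.
  by apply: eq_big => [Y|Y _]; [rewrite properEneq andbC|rewrite coefZ coef_poly ltnS Hi].
move/eqP; rewrite addrC addr_eq0 => /eqP ->.
by rewrite size_min_reps_self //; case: (i == 0%N); rewrite /eps /= ?mulr1 ?mulr0 ?oppr0.
Qed.

Lemma fraction_infinite (X : {set T}) (L : {poly rat}) (g : {set T} -> {poly rat}) :
  ~ WX_finite m X -> (forall Y : {set T}, Y \proper X -> fraction_eq m Y (g Y) L) ->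
  fraction_eq m X (- \sum_(Y : {set T} | Y \proper X) g Y) L.
Proof.
move=> Hinf Hg; apply: trunc_fraction => n.
have sum_g : trunc_eq n (L * \sum_(Y : {set T} | Y \proper X) eps Y *: reps_poly n X Y)
                        ((\sum_(Y : {set T} | Y \proper X) g Y) * growth_poly n X).
  rewrite mulr_sumr mulr_suml; apply: trunc_eq_sum => Y HY.
  rewrite -scalerAr scalerAl.
  apply: trunc_eq_trans (trunc_eq_mull _ (fraction_trunc (n := n) (Hg Y HY))) _.
  rewrite -mulrA [growth_poly n Y * _]mulrC; apply/trunc_eq_mulr/trunc_eq_sym.
  exact/growth_poly_factor/proper_sub.
have := trunc_eq_trans (trunc_eq_sym (trunc_eq_mulr L (reps_poly_alternating (n := n) Hinf))) sum_g.
move=> /trunc_eq_opp H i Hi; rewrite mulNr -H //.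
by rewrite -scalerAr mulr1 coefN !coefZ mulNr opprK.
Qed.

Lemma fraction_finite (X : {set T}) (P L : {poly rat}) :
  poincare_poly m X P -> P %| L -> exists g, fraction_eq m X g L.
Proof.
move=> HP /dvdpP [Q ->]; exists (eps X *: Q) => n.
rewrite coefM big_distrr /=; apply: eq_bigr => j _.
by rewrite coefZ HP mulrA.
Qed.

Theorem fraction_over_lcm (L : {poly rat}) : ~ WX_finite m [set: T] ->
  (forall Y : {set T}, Y \proper [set: T] -> WX_finite m Y ->
     exists2 P, poincare_poly m Y P & P %| L) ->
  forall X : {set T}, X \proper [set: T] -> exists g, fraction_eq m X g L.
Proof.
move=> Hinf HL X; elim: {X}#|X|.+1 {-2}X (ltnSn #|X|) => // k IH X HXk HX.
case: (classic (WX_finite m X)) => [Hfin|Hinf_X].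
  by have [P HP HPL] := HL X HX Hfin; exact: fraction_finite HP HPL.
pose g Y := epsilon (inhabits 0) (fun g => fraction_eq m Y g L).
exists (- \sum_(Y : {set T} | Y \proper X) g Y); apply: fraction_infinite => // Y HY.
have [|g0 Hg0] := IH Y (leq_trans (proper_card HY) HXk); first exact: proper_trans HY HX.
exact: (epsilon_spec (inhabits 0) (fun g => fraction_eq m Y g L) (ex_intro _ g0 Hg0)).
Qed.

End Fractions.

Section Poincare.
Variables (T : finType) (m : T -> T -> nat).

Lemma growth0 (X : {set T}) : growth m X 0 = 1%N.
Proof.
rewrite growth_canon_words; suff /perm_size -> : perm_eq (canon_words m (inWXb m X) 0) [:: [::]] by [].
apply: uniq_perm => //; first exact: uniq_canon_words.
move=> x; rewrite inE mem_canon_words; apply/idP/eqP => [/and3P [/eqP /size0nil -> _ _] //|->].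
by rewrite /= canon_nil eqxx /=; apply/pbP; exact: inWX_word.
Qed.

(* A finite W_X has a Poincare polynomial: lengths are bounded. *)
Lemma poincare_exists (X : {set T}) : WX_finite m X -> exists P, poincare_poly m X P.
Proof.
move=> [s Hs]; set N := \max_(v <- s) size v.
have vanish i : (N < i)%N -> growth m X i = 0%N.
  move=> Hi; rewrite growth_canon_words; apply/eqP; rewrite size_eq0; apply/eqP.
  case E: (canon_words m (inWXb m X) i) => [//|x l]; exfalso.
  have : x \in canon_words m (inWXb m X) i by rewrite E mem_head.
  rewrite mem_canon_words => /and3P [/eqP Hsz /eqP Hc /pbP /Hs [v Hv Cv]].
  have : (len m x <= N)%N by apply: leq_trans (len_min Cv) _; exact: leq_bigmax_seq.
  by rewrite -(canon_size Hc) Hsz leqNgt Hi.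
exists (\poly_(i < N.+1) (growth m X i)%:R) => i; rewrite coef_poly.
by case: ltnP => // Hi; rewrite vanish.
Qed.

Lemma poincare_uniq (X : {set T}) P Q : poincare_poly m X P -> poincare_poly m X Q -> P = Q.
Proof. by move=> HP HQ; apply/polyP => i; rewrite HP HQ. Qed.

Lemma poincare_neq0 (X : {set T}) P : poincare_poly m X P -> P != 0.
Proof. by move=> HP; apply/eqP => E; have := HP 0%N; rewrite E coef0 growth0. Qed.

Lemma poincare_irred_denom (X : {set T}) P :
  poincare_poly m X P -> irred_denom m X ((lead_coef P)^-1 *: P).
Proof.
move=> HP; have Hl : lead_coef P != 0 by rewrite lead_coef_eq0 (poincare_neq0 HP).
have He : eps X != 0 by rewrite /eps signr_eq0.
exists ((eps X * (lead_coef P)^-1) *: 1); split.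
- by rewrite monicE lead_coefZ mulVf.
- by rewrite coprimepZl ?coprime1p // mulf_neq0 // invr_eq0.
- move=> n; rewrite big_ord_recl big1 => [|i _]; last by rewrite coefZ coef1 /= mulr0 mul0r.
  by rewrite addr0 !coefZ coef1 /= mulr1 subn0 HP mulrA.
Qed.

(* The Virg(D) polynomial exists: a nonzero common multiple (the product of
   the finitely many W_X(t)) has a monic lcm. *)
Lemma lcm_exists (F : {poly rat} -> Prop) (M0 : {poly rat}) :
  M0 != 0 -> (forall p, F p -> p %| M0) -> exists L, is_monic_lcm F L.
Proof.
move=> HM0 HF.
have Ex : exists k, pb (exists M : {poly rat}, [/\ M != 0, (forall p, F p -> p %| M) & size M = k]).
  by exists (size M0); apply/pbP; exists M0.
case: (ex_minnP Ex) => k /pbP [M [HM HMF <-]] Hmin.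
have Hl : lead_coef M != 0 by rewrite lead_coef_eq0.
exists ((lead_coef M)^-1 *: M); split.
- by rewrite monicE lead_coefZ mulVf.
- by move=> p Hp; rewrite dvdpZr ?invr_eq0 // HMF.
- move=> N HN; rewrite dvdpZl ?invr_eq0 //.
  case: (eqVneq (N %% M) 0) => [/modp_eq0P //|Hr]; exfalso.
  have : (size M <= size (N %% M)%R)%N.
    by apply: Hmin; apply/pbP; exists (N %% M); split => // p Hp; rewrite -dvdp_mod ?HMF // HN.
  by rewrite leqNgt ltn_modp HM.
Qed.

Lemma Virg_exists : exists L, Virg m L.
Proof.
pose PX X := epsilon (inhabits (0 : {poly rat})) (poincare_poly m X).
have HPX X : WX_finite m X -> poincare_poly m X (PX X).
  by move=> /poincare_exists; exact: epsilon_spec.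
apply: (@lcm_exists _ (\prod_(X : {set T} | pb (X \proper [set: T] /\ WX_finite m X)) PX X)).
  rewrite prodf_seq_neq0; apply/allP => X _; apply/implyP => /pbP [_ HX].
  exact: poincare_neq0 (HPX X HX).
move=> p [X [HXp HXf HXP]]; rewrite (poincare_uniq HXP (HPX X HXf)) (bigD1 X) /=.
  exact: dvdp_mulIl.
by apply/pbP.
Qed.

End Poincare.

Lemma irred_denom_dvd (T : finType) (m : T -> T -> nat) (X : {set T}) g L q :
  fraction_eq m X g L -> irred_denom m X q -> q %| L.
Proof.
move=> Hg [p [Hqm Hcop Hfr]].
have He : eps X != 0 by rewrite /eps signr_eq0.
have E : q * g = L * p.
  apply/polyP => n; apply: (mulfI He).
  have := trunc_eq_mull g (fraction_trunc (n := n) Hfr) (leqnn n).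
  have := trunc_eq_mull p (fraction_trunc (n := n) Hg) (leqnn n).
  rewrite -!scalerAl !coefZ => -> ->.
  by rewrite mulrC (mulrC p) mulrA.
have : q %| L * p by rewrite -E dvdp_mulIl.
by rewrite Gauss_dvdpl // coprimep_sym.
Qed.

Theorem mainTheorem5 (T : finType) (m : T -> T -> nat)
  (hm : coxeter_matrix m) (hinf : ~ WX_finite m [set: T]) :
  exists L : {poly rat},
    is_monic_lcm (fun q => exists X : {set T},
                    X \proper [set: T] /\ irred_denom m X q) L
    /\ Virg m L.
Proof.
have [L HL] := Virg_exists m; exists L; split=> //.
case: HL => HLm HLdiv HLmin; split=> //.
- (* every reduced denominator divides L: eps(X)/W_X(t) = g / L *)
  move=> q [X [HX Hq]].
  have HLP (Y : {set T}) : Y \proper [set: T] -> WX_finite m Y ->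
      exists2 P, poincare_poly m Y P & P %| L.
    by move=> HY HYf; have [P HP] := poincare_exists HYf; exists P => //; apply: HLdiv; exists Y.
  have [g Hg] := fraction_over_lcm hm hinf HLP HX.
  exact: irred_denom_dvd Hg Hq.
- (* each W_X(t) with W_X finite is, up to a unit, a reduced denominator *)
  move=> M HM; apply: HLmin => P [X [HX HXf HXP]].
  have Hl : (lead_coef P)^-1 != 0 by rewrite invr_eq0 lead_coef_eq0 (poincare_neq0 HXP).
  by rewrite -(dvdpZl _ _ Hl); apply: HM; exists X; split=> //; exact: poincare_irred_denom.
Qed.
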